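(* Let $n\ge 1$ and let $\mathbf{c}=(c_1,\dots,c_n)$ be a cover object whose joint distribution $P_c$ is a correlated multivariate quantized Gaussian distribution (CMQGD) with mean vector $\vec{\mu_c}$ and positive definite covariance matrix $\Sigma_c$, these parameters being known to the sender, the receiver and the eavesdropper. Let the stego-object be $\mathbf{s}=\mathbf{c}+\mathbf{m}$, where the coded message $\mathbf{m}$ has distribution $P_m$, and suppose the stego distribution $P_s$ is a CMQGD with parameters $(\vec{\mu_s},\Sigma_s)$. Use the entropy approximation $H(P)\approx \tfrac12\ln(2\pi e|\Sigma|)+b$ for a CMQGD with covariance $\Sigma$ quantized with $b$ bits, and take the KL-divergence to be $$\mathcal{D}(P_s\parallel P_c)=\tfrac12\Big(\mathrm{tr}(\Sigma_c^{-1}\Sigma_s)+(\vec{\mu_c}-\vec{\mu_s})^T\Sigma_c^{-1}(\vec{\mu_c}-\vec{\mu_s})+\ln\tfrac{|\Sigma_c|}{|\Sigma_s|}-n\Big).$$ Consider the optimization problem of maximizing $H(P_s)$ over $P_m$ subject to $\mathcal{D}(P_s\parallel P_c)\le 2\epsilon^2$, for a design parameter $\epsilon>0$ limiting the detection capability of the optimal steganalysis detector (i.e. $P_D\le\sqrt{\mathcal{D}(P_s\parallel P_c)/2}\le\epsilon$). Then: (1) the solution is achieved when $P_m$ is a CMQGD with mean $\vec{\mu_m}=0$ and covariance $\Sigma_m=\big(-W(-\tfrac{4\epsilon^2}{n}-1-i\pi)-1\big)\Sigma_c$, where $W$ is the WrightOmega function; (2) the maximum achievable embedding rate is $I(P_s;P_m)\approx\frac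 n2\ln\big(-W(-\tfrac{4\epsilon^2}{n}-1-i\pi)\big)$ for sufficiently large $n$.
   Context: A CMQGD is a uniformly quantized version of a (correlated) multivariate Gaussian distribution. $P_D$ is the probability of correct detection by the eavesdropper's steganalysis detector performing a binary hypothesis test (no embedding vs. embedding). The embedding rate is the mutual information $I(P_s;P_m)=H(P_s)-H(P_s\mid P_m)=H(P_s)-H(P_c)$. The WrightOmega function $W(z)$ is the function satisfying $W(z)+\ln W(z)=z$, given by $W(z)=\mathcal{W}_{\lceil(\mathrm{Im}(z)-\pi)/(2\pi)\rceil}(e^z)$ where $\mathcal{W}_k$ are the branches of the Lambert W function. $|\cdot|$ denotes the determinant. *)

From HB Require Import structures.
From mathcomp Require Import all_boot all_order all_algebra.
From mathcomp Require Import all_classical all_reals all_analysis.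
Set Implicit Arguments. Unset Strict Implicit. Unset Printing Implicit Defensive.
Import Order.TTheory GRing.Theory Num.Theory.
Local Open Scope ring_scope.

Section Defs.
Variable R : realType.

Definition posdef (n : nat) (A : 'M[R]_n) : Prop :=
  A^T = A /\ forall v : 'rV[R]_n, v != 0 -> 0 < (v *m A *m v^T) 0 0.

Definition H_cmqgd (n : nat) (b : R) (S : 'M[R]_n) : R :=
  2^-1 * ln ((2 * pi * expR 1) ^+ n * \det S) + b.

Definition KL_cmqgd (n : nat) (mus : 'rV[R]_n) (Ss : 'M[R]_n)
    (muc : 'rV[R]_n) (Sc : 'M[R]_n) : R :=
  2^-1 * (\tr (invmx Sc *m Ss)
          + ((muc - mus) *m invmx Sc *m (muc - mus)^T) 0 0
          + ln (\det Sc / \det Ss) - n%:R).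

(* Real branch W_{-1} of the Lambert W function on [-1/e, 0):
   the unique real w <= -1 with w e^w = x. *)
Definition lambertW_m1 (x : R) : R :=
  xget 0 [set w : R | w <= -1 /\ w * expR w = x]%classic.

(* WrightOmega W(z) = W_{ceil((Im z - pi)/(2 pi))}(e^z), specialised to
   arguments z = u - i*pi (Im z = -pi): the branch index is -1 and
   e^z = - e^u, so W(u - i pi) = W_{-1}(- e^u). *)
Definition wrightOmega_negpi (u : R) : R := lambertW_m1 (- expR u).

End Defs.

From HB Require Import structures.
From mathcomp Require Import all_boot all_order all_algebra.
From mathcomp Require Import all_classical all_reals all_analysis.
From mathcomp Require Import lra ring.
Import Order.TTheory GRing.Theory Num.Theory.
Local Open Scope classical_set_scope.
Local Open Scope ring_scope.
Set Implicit Arguments. Unset Strict Implicit. Unset Printing Implicit Defensive.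

(* Put k := -W(-4 eps^2/n - 1 - i pi); it is the root k > 1 of k - 1 - ln k = 4 eps^2/n.
   Whitening against Sigma_c turns a feasible stego covariance Sigma into a positive definite
   B = M Sigma M^T with tr B - ln |B| <= n (k - ln k), the mean term of the divergence being
   nonnegative, while the entropy grows with ln |B| = ln |Sigma| - ln |Sigma_c|.  A unimodular
   congruence (an LDL^T factorisation) makes B diagonal with entries d_i, |B| = prod d_i and
   tr B >= sum d_i, so the tangent bound k ln x - x <= k ln k - k on each d_i, added to the
   constraint, gives (k - 1) ln |B| <= (k - 1) n ln k.  Hence |Sigma| <= k^n |Sigma_c| = |k Sigma_c|. *)

Section WrightOmega.
Variable R : realType.

Lemma expR_ge2x (s : R) : 0 <= s -> 2 * s <= expR s.
Proof.
move=> s0.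
have e : expR s = expR (s / 2) ^+ 2 by rewrite -expRM_natr divfK.
have h : (1 + s / 2) ^+ 2 <= expR (s / 2) ^+ 2.
  by rewrite ler_pXn2r ?nnegrE ?expR_ge1Dx ?expR_ge0 //; lra.
rewrite e; apply: le_trans h; have := sqr_ge0 (1 - s / 2); rewrite !expr2; lra.
Qed.

Lemma sub_expR_surj (u : R) : u <= -1 -> exists2 t, 0 <= t & t - expR t = u.
Proof.
move=> u1.
have cont : {within `[0, - u], continuous (fun t : R => t - expR t)}.
  by apply: continuous_subspaceT => x; apply: continuousB => //; exact: continuous_expR.
have u0 : 0 <= - u by lra.
have [|t] := @IVT _ _ _ _ u u0 cont.
  rewrite expR0 sub0r; apply/andP; split.
  - by rewrite ge_min; apply/orP; right; have := expR_ge2x (s := - u); lra.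
  - by rewrite le_max; apply/orP; left.
by rewrite in_itv /= => /andP[t0 _] tu; exists t.
Qed.

Lemma wrightOmega_negpi_spec (u : R) : u <= -1 ->
  let w := wrightOmega_negpi u in w <= -1 /\ w + ln (- w) = u.
Proof.
move=> u1 w; have [t t0 tu] := sub_expR_surj u1.
have : [set w | w <= -1 /\ w * expR w = - expR u] w.
  apply: xgetPex; exists (- expR t); split.
    by have := expR_ge1Dx t; lra.
  by rewrite mulNr -expRD tu.
move=> [w1 wE]; split => //.
have : ln (- w * expR w) = u by rewrite mulNr wE opprK expRK.
by rewrite lnM ?posrE ?expR_gt0 ?expRK //; lra.
Qed.

Lemma opp_wrightOmega_negpi_spec (a : R) : 0 < a ->
  let k := - wrightOmega_negpi (- a - 1) in 1 < k /\ k - 1 - ln k = a.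
Proof.
move=> a0 k; have [|w1 wE] := wrightOmega_negpi_spec (u := - a - 1); first lra.
have ka : k - 1 - ln k = a by rewrite /k; lra.
split=> //; rewrite lt_neqAle; apply/andP; split; last by rewrite /k; lra.
by apply/eqP => k1; move: ka; rewrite -k1 ln1; lra.
Qed.

End WrightOmega.

Lemma schur_congr (F : fieldType) n (a : F) (v : 'rV[F]_n) (C : 'M[F]_n) :
  a != 0 ->
  let E := block_mx 1%:M 0 (- a^-1 *: v^T) 1%:M in
  E *m block_mx a%:M v v^T C *m E^T = block_mx a%:M 0 0 (C - a^-1 *: (v^T *m v)).
Proof.
move=> a0 E.
have Ea : (- a^-1 *: v^T) *m a%:M = - v^T.
  by rewrite mul_mx_scalar scalerA mulrN mulfV // scaleN1r.
have aE : a%:M *m (- a^-1 *: v^T)^T = - v.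
  by rewrite mul_scalar_mx linearZ /= trmxK scalerA mulrN mulfV // scaleN1r.
rewrite /E tr_block_mx !trmx1 trmx0 !mulmx_block !(mul0mx, mulmx0, mul1mx, mulmx1, addr0, add0r).
by rewrite Ea aE !addNr mul0mx add0r -scalemxAl scaleNr addrC.
Qed.

Section PosDef.
Variable R : realType.
Implicit Types (n : nat).

Lemma posdef_form_ge0 n (A : 'M[R]_n) (v : 'rV_n) : posdef A -> 0 <= (v *m A *m v^T) 0 0.
Proof.
move=> [_ pA]; have [->|v0] := eqVneq v 0; last exact/ltW/pA.
by rewrite !mul0mx mxE.
Qed.

Lemma posdef_congr n (P A : 'M[R]_n) : P \in unitmx -> posdef A -> posdef (P *m A *m P^T).
Proof.
move=> uP [sA pA]; split; first by rewrite !trmx_mul trmxK sA mulmxA.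
move=> v v0; have vP0 : v *m P != 0.
  by apply: contra v0 => /eqP vP0; rewrite -(mulmxK uP v) vP0 mul0mx.
by move: (pA _ vP0); rewrite trmx_mul !mulmxA.
Qed.

Lemma posdefZ n c (A : 'M[R]_n) : 0 < c -> posdef A -> posdef (c *: A).
Proof.
move=> c0 [sA pA]; split; first by rewrite linearZ /= sA.
by move=> v v0; rewrite -scalemxAr -scalemxAl mxE mulr_gt0 // pA.
Qed.

Lemma posdef_block_ul n (a : 'M[R]_1) v w (C : 'M[R]_n) :
  posdef (block_mx a v w C) -> 0 < a 0 0.
Proof.
move=> [_ pA]; have e0 : row_mx 1%:M 0 != 0 :> 'rV[R]_(1 + n).
  by rewrite -row_mx0; apply/eqP => /eq_row_mx[/matrixP/(_ 0 0)/eqP]; rewrite !mxE oner_eq0.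
move: (pA _ e0).
by rewrite mul_row_block tr_row_mx mul_row_col !(mul0mx, mulmx0, addr0, trmx0, mul1mx, trmx1, mulmx1).
Qed.

Lemma posdef_block_dr n (a : 'M[R]_1) v w (C : 'M[R]_n) :
  posdef (block_mx a v w C) -> posdef C.
Proof.
move=> [sA pA]; split; first by move: sA; rewrite tr_block_mx => /eq_block_mx[].
move=> x x0; have e0 : row_mx 0 x != 0 :> 'rV[R]_(1 + n).
  by apply: contra x0 => /eqP; rewrite -row_mx0 => /eq_row_mx[_ ->].
move: (pA _ e0).
by rewrite mul_row_block tr_row_mx mul_row_col !(mul0mx, mulmx0, add0r, trmx0).
Qed.

Lemma posdef_block_sym n (A : 'M[R]_(1 + n)) : posdef A ->
  A = block_mx (ulsubmx A 0 0)%:M (ursubmx A) (ursubmx A)^T (drsubmx A).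
Proof.
move=> [sA _]; rewrite -[in RHS](mx11_scalar (ulsubmx A)).
suff -> : (ursubmx A)^T = dlsubmx A by rewrite submxK.
by rewrite trmx_ursub sA.
Qed.

Lemma posdef_ldl n (A : 'M[R]_n) : posdef A -> exists P (d : 'rV[R]_n),
  [/\ \det P = 1, P *m A *m P^T = diag_mx d & forall i, 0 < d 0 i <= A i i].
Proof.
elim: n A => [|n IH] A hA.
  by exists 1%:M, 0; split; [rewrite det1 | apply/matrixP => -[] | case].
move: A hA; rewrite -[n.+1]/(1 + n)%N => A hA.
have eA := posdef_block_sym hA; move: hA; rewrite [A]eA.
set a := ulsubmx A 0 0; set v := ursubmx A; set C := drsubmx A => hA.
have a0 : 0 < a by move: (posdef_block_ul hA); rewrite mxE eqxx mulr1n.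
pose E : 'M[R]_(1 + n) := block_mx 1%:M 0 (- a^-1 *: v^T) 1%:M.
pose S := C - a^-1 *: (v^T *m v).
have EA : E *m block_mx a%:M v v^T C *m E^T = block_mx a%:M 0 0 S.
  exact: schur_congr (lt0r_neq0 a0).
have dE : \det E = 1 by rewrite det_lblock !det1 mulr1.
have uE : E \in unitmx by rewrite unitmxE dE unitr1.
have /posdef_block_dr pS : posdef (block_mx a%:M 0 0 S : 'M[R]_(1 + n)).
  by rewrite -EA; apply: posdef_congr.
have [P [d [dP PS hd]]] := IH S pS.
pose B : 'M[R]_(1 + n) := block_mx 1%:M 0 0 P.
exists (B *m E), (row_mx a%:M d); split.
- by rewrite det_mulmx dE det_ublock det1 dP !mulr1.
- rewrite trmx_mul (_ : _ *m (E^T *m B^T) = B *m (E *m block_mx a%:M v v^T C *m E^T) *m B^T).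
    rewrite EA tr_block_mx trmx1 !trmx0 !mulmx_block.
    rewrite !(mul0mx, mulmx0, mul1mx, mulmx1, addr0, add0r) PS diag_mx_row.
    by congr block_mx; apply/matrixP => i j; rewrite !ord1 !mxE eqxx mulr1n.
  by rewrite !mulmxA.
- move=> i; case: (split_ordP i) => j ->.
    by rewrite row_mxEl block_mxEul !ord1 mxE eqxx mulr1n a0 lexx.
  have /andP[dj0 djS] := hd j; rewrite row_mxEr block_mxEdr dj0 (le_trans djS) //.
  rewrite /S !mxE big_ord1 !mxE lerBlDr lerDl.
  by rewrite mulr_ge0 ?invr_ge0 ?(ltW a0) // -expr2 sqr_ge0.
Qed.

Lemma posdef_diag_factor n (A : 'M[R]_n) : posdef A -> exists d : 'rV[R]_n,
  [/\ forall i, 0 < d 0 i, \det A = \prod_i d 0 i & \sum_i d 0 i <= \tr A].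
Proof.
move=> /posdef_ldl[P [d [dP PA hd]]]; exists d; split.
- by move=> i; case/andP: (hd i).
- by rewrite -det_diag -PA !det_mulmx det_tr dP mul1r mulr1.
- by apply: ler_sum => i _; case/andP: (hd i).
Qed.

Lemma posdef_det_gt0 n (A : 'M[R]_n) : posdef A -> 0 < \det A.
Proof. by case/posdef_diag_factor => d [d0 -> _]; apply: prodr_gt0 => i _. Qed.

Lemma posdef_unitmx n (A : 'M[R]_n) : posdef A -> A \in unitmx.
Proof. by move/posdef_det_gt0; rewrite unitmxE unitfE => /lt0r_neq0. Qed.

Lemma ln_prod (I : finType) (F : I -> R) : (forall i, 0 < F i) ->
  ln (\prod_i F i) = \sum_i ln (F i).
Proof.
move=> F0; suff [] : 0 < \prod_i F i /\ ln (\prod_i F i) = \sum_i ln (F i) by [].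
apply: (big_ind2 (fun x y => 0 < x /\ ln x = y)) => [|x1 x2 y1 y2 [x10 <-] [x20 <-]|i _] //.
- by rewrite ln1.
- by rewrite mulr_gt0 // lnM.
Qed.

Lemma posdef_ln_det_sub_trace_le n (A : 'M[R]_n) (p c : R) :
  (forall x, 0 < x -> p * ln x - x <= c) -> posdef A ->
  p * ln (\det A) - \tr A <= n%:R * c.
Proof.
move=> hc /posdef_diag_factor[d [d0 -> dA]].
have -> : n%:R * c = \sum_(i < n) c by rewrite sumr_const card_ord mulr_natl.
rewrite ln_prod // mulr_sumr; apply: (@le_trans _ _ (\sum_i (p * ln (d 0 i) - d 0 i))).
  by rewrite sumrB lerD2l lerN2.
by apply: ler_sum => i _; exact: hc.
Qed.

Lemma posdef_whiten n (A : 'M[R]_n) : posdef A ->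
  exists2 M, M \in unitmx & M *m A *m M^T = 1%:M.
Proof.
move=> /posdef_ldl[P [d [dP PA hd]]].
pose G : 'M[R]_n := diag_mx (\row_i (Num.sqrt (d 0 i))^-1).
have GdG : G *m diag_mx d *m G = 1%:M.
  apply/matrixP => i j; rewrite /G !mulmx_diag !mxE.
  have /andP[di _] := hd i; have si : Num.sqrt (d 0 i) != 0 by rewrite sqrtr_eq0 -ltNge.
  by rewrite -{2}(sqr_sqrtr (ltW di)) expr2 mulrA mulVf // mul1r mulfV.
have GPAPG : G *m P *m A *m (G *m P)^T = 1%:M.
  by rewrite trmx_mul tr_diag_mx -GdG -PA !mulmxA.
have [uGPA _] := mulmx1_unit GPAPG.
by exists (G *m P) => //; move: uGPA; rewrite unitmx_mul => /andP[].
Qed.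

Lemma posdef_relative n (A S : 'M[R]_n) : posdef A -> posdef S ->
  exists B : 'M[R]_n, [/\ posdef B, \tr B = \tr (invmx A *m S) & \det B = \det S / \det A].
Proof.
move=> hA hS; have [M uM MA] := posdef_whiten hA.
have AM : A *m (M^T *m M) = 1%:M.
  by apply: (can_inj (mulKmx uM)); rewrite mulmx1 !mulmxA MA mul1mx.
have iA : invmx A = M^T *m M.
  by rewrite -[RHS](mulKmx (posdef_unitmx hA)) AM mulmx1.
exists (M *m S *m M^T); split; first exact: posdef_congr.
  by rewrite mxtrace_mulC mulmxA -iA.
have dA : \det A != 0 by rewrite lt0r_neq0 ?posdef_det_gt0.
have dM : \det M * \det A * \det M = 1 by rewrite -{2}det_tr -!det_mulmx MA det1.
by apply: (mulIf dA); rewrite divfK // !det_mulmx det_tr -[RHS]mul1r -dM; ring.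
Qed.

End PosDef.

Section Gaussian.
Variable R : realType.
Implicit Types (n : nat) (k : R).

Lemma mul_ln_sub_le k (x : R) : 0 < k -> 0 < x -> k * ln x - x <= k * ln k - k.
Proof.
move=> k0 x0; have xk : 0 < x / k by rewrite divr_gt0.
have := @le_ln1Dx R (x / k - 1); rewrite [1 + _]addrC subrK => /(_ ltac:(lra)).
rewrite -(ler_pM2l k0) ln_div ?posrE // !mulrBr mulr1 mulrCA divff ?lt0r_neq0 // mulr1.
lra.
Qed.

Lemma posdef_det_le_of_trace n k (B : 'M[R]_n) : 1 < k -> posdef B ->
  \tr B - ln (\det B) <= n%:R * (k - ln k) -> \det B <= k ^+ n.
Proof.
move=> k1 hB hT; have k0 : 0 < k by lra.
have hk := posdef_ln_det_sub_trace_le (fun x => mul_ln_sub_le k0 (x := x)) hB.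
have : (k - 1) * ln (\det B) <= (k - 1) * (n%:R * ln k) by nra.
rewrite ler_pM2l ?subr_gt0 // mulr_natl -lnXn // ler_ln ?posrE ?exprn_gt0 //.
exact: posdef_det_gt0.
Qed.

Lemma posdef_invmx n (A : 'M[R]_n) : posdef A -> posdef (invmx A).
Proof.
move=> hA; have uA := posdef_unitmx hA; have [sA pA] := hA.
split; first by rewrite trmx_inv sA.
move=> v v0; have vA0 : v *m invmx A != 0.
  by apply: contra v0 => /eqP vA0; rewrite -(mulmxKV uA v) vA0 mul0mx.
by move: (pA _ vA0); rewrite trmx_mul trmx_inv sA !mulmxA mulmxKV.
Qed.

Lemma KL_cmqgd_ge n (mus muc : 'rV[R]_n) (Ss Sc : 'M[R]_n) : posdef Sc ->
  2^-1 * (\tr (invmx Sc *m Ss) + ln (\det Sc / \det Ss) - n%:R) <= KL_cmqgd mus Ss muc Sc.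
Proof.
move=> /posdef_invmx/(posdef_form_ge0 (muc - mus)) q0.
by rewrite /KL_cmqgd ler_pM2l ?invr_gt0 //; lra.
Qed.

Lemma KL_cmqgdZ n k (mu : 'rV[R]_n) (S : 'M[R]_n) : 0 < k -> posdef S ->
  KL_cmqgd mu (k *: S) mu S = n%:R / 2 * (k - 1 - ln k).
Proof.
move=> k0 hS; have dS := posdef_det_gt0 hS.
rewrite /KL_cmqgd subrr !mul0mx mxE -scalemxAr mxtraceZ mulVmx ?posdef_unitmx //.
rewrite mxtrace1 detZ invfM mulrCA divff ?lt0r_neq0 // mulr1 lnV ?posrE ?exprn_gt0 //.
by rewrite lnXn // -mulr_natr; field.
Qed.

Lemma H_cmqgdE n b (S : 'M[R]_n) : 0 < \det S ->
  H_cmqgd b S = 2^-1 * (ln ((2 * pi * expR 1) ^+ n) + ln (\det S)) + b.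
Proof.
move=> dS; rewrite /H_cmqgd lnM ?posrE // exprn_gt0 //.
by rewrite !mulr_gt0 ?pi_gt0 ?expR_gt0.
Qed.

Lemma H_cmqgd_le n b (S S' : 'M[R]_n) : 0 < \det S -> \det S <= \det S' ->
  H_cmqgd b S <= H_cmqgd b S'.
Proof.
move=> dS dSS'; have dS' := lt_le_trans dS dSS'.
by rewrite !H_cmqgdE // lerD2r ler_pM2l ?invr_gt0 // lerD2l ler_ln ?posrE.
Qed.

Lemma H_cmqgdZ n b k (S : 'M[R]_n) : 0 < k -> 0 < \det S ->
  H_cmqgd b (k *: S) - H_cmqgd b S = n%:R / 2 * ln k.
Proof.
move=> k0 dS; have dkS : 0 < \det (k *: S) by rewrite detZ mulr_gt0 ?exprn_gt0.
rewrite !H_cmqgdE // detZ lnM ?posrE ?exprn_gt0 // (lnXn _ k0) -mulr_natr.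
by field.
Qed.

End Gaussian.

Theorem theorem1 (R : realType) (n : nat) (hn : (1 <= n)%N) (eps b : R)
  (heps : 0 < eps) (muc : 'rV[R]_n) (Sc : 'M[R]_n) (hSc : posdef Sc) :
  let k := - wrightOmega_negpi (- (4 * eps ^+ 2 / n%:R) - 1) in
  let mum : 'rV[R]_n := 0 in
  let Sm := (k - 1) *: Sc in
  let mus := muc + mum in
  let Ss := Sc + Sm in
  (* (1) optimality *)
  (posdef Sm /\ posdef Ss /\ KL_cmqgd mus Ss muc Sc <= 2 * eps ^+ 2 /\
   forall (mus' : 'rV[R]_n) (Ss' : 'M[R]_n), posdef Ss' ->
     KL_cmqgd mus' Ss' muc Sc <= 2 * eps ^+ 2 ->
     H_cmqgd b Ss' <= H_cmqgd b Ss) /\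
  (* (2) embedding rate I(P_s;P_m) = H(P_s) - H(P_c) *)
  H_cmqgd b Ss - H_cmqgd b Sc = n%:R / 2 * ln k.
Proof.
move=> k mum Sm mus Ss.
have n0 : 0 < n%:R :> R by rewrite ltr0n.
have a0 : 0 < 4 * eps ^+ 2 / n%:R by rewrite !(mulr_gt0, exprn_gt0, invr_gt0).
have [k1 ka] := opp_wrightOmega_negpi_spec a0; rewrite -/k in k1 ka.
have k0 : 0 < k by lra.
have eps2 : 2 * eps ^+ 2 = n%:R / 2 * (k - 1 - ln k) by rewrite ka; field; rewrite lt0r_neq0.
have eSs : Ss = k *: Sc by rewrite /Ss /Sm scalerBl scale1r addrC subrK.
have dSc := posdef_det_gt0 hSc.
split; last by rewrite eSs H_cmqgdZ.
split; first by apply: posdefZ; rewrite ?subr_gt0.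
split; first by rewrite eSs; apply: posdefZ.
split; first by rewrite /mus /mum addr0 eSs KL_cmqgdZ // eps2.
move=> mus' Ss' hSs' hKL; have [B [hB trB dB]] := posdef_relative hSc hSs'.
have dSs' := posdef_det_gt0 hSs'.
have lnB : ln (\det Sc / \det Ss') = - ln (\det B).
  by rewrite dB -lnV ?posrE ?divr_gt0 // invf_div.
have := le_trans (KL_cmqgd_ge mus' muc Ss' hSc) hKL; rewrite -trB lnB eps2 => hT.
have /posdef_det_le_of_trace : \tr B - ln (\det B) <= n%:R * (k - ln k) by lra.
move=> /(_ k1 hB); rewrite dB ler_pdivrMr // => hdet.
by apply: H_cmqgd_le => //; rewrite eSs detZ.
Qed.
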